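(* Fix $d \geq 2$. There exists a constant $c = c(d)$ such that for all $n$ large enough, all integers $k \geq n/(3d)$ and all $\theta \geq 1/(2d)$, the number of $(d-1)$-dimensional subcomplexes $X$ of the simplex on $n$ vertices with $|X| = k$ and $\beta(X) \leq (1-\theta)kn$ is at most $$\left(c\, n^{(d-1)\left(1 - \theta\left(1 - \frac{1}{2d^2}\right)\right)}\right)^k.$$
   Context: A $(d-1)$-dimensional subcomplex $X$ of the simplex on $[n]$ is identified with its set of $(d-1)$-faces, and $|X|$ is their number. $\beta(X)$ is the number of $d$-faces of the full simplex on $[n]$ that contain exactly one $(d-1)$-face of $X$. *)

From mathcomp Require Import all_boot.
From Stdlib Require Import Reals.

Set Implicit Arguments.
Unset Strict Implicit.
Unset Printing Implicit Defensive.

(* The (d-1)-faces of the simplex on [n] = {0,...,n-1}: the d-element subsets. *)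
Definition faces (n d : nat) : {set {set 'I_n}} := [set A : {set 'I_n} | #|A| == d].

Definition beta (n d : nat) (X : {set {set 'I_n}}) : nat :=
  #|[set s : {set 'I_n} | (#|s| == d.+1) && (#|[set A in X | A \subset s]| == 1)]|.

(* Number of (d-1)-dimensional subcomplexes X (identified with their sets of
   (d-1)-faces) with |X| = k and beta(X) <= (1 - theta) k n. *)
Definition count_complexes (n d k : nat) (theta : R) : nat :=
  #|[set X : {set {set 'I_n}} |
      [&& X \subset faces n d, #|X| == k &
          (if Rle_dec (INR (beta d X)) ((1 - theta) * INR k * INR n)%R then true else false)]]|.

(* Fix t ~ n^(1 - g) with g = (d - 1) / (2 d^2), and call a (d-2)-face (a ridge)
   heavy for X when it lies in at least t faces of X.  There are at most d k / t
   heavy ridges, and the faces containing them lie among at most d k n / t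
   candidates.  A face A of X containing no heavy ridge (a light face) has at
   least n - d - d^2 t vertices v such that A is the only face of X inside
   A u {v}, so beta(X) >= #light * (n - d - d^2 t): a small beta(X) leaves at most
   about (1 - theta) k light faces.  Choosing the heavy ridges (n^(d^2 k / t) =
   e^(O(k)) ways), the other faces among the d k n / t candidates and the light
   faces among all faces gives at most (c n^g)^k (n^(d-1-g))^((1-theta) k)
   complexes, which is the bound. *)

From mathcomp Require Import all_boot.
From Stdlib Require Import Reals Lra Lia.
From mathcomp Require Import zify.
(* Stdlib's arithmetic notations shadow ssrnat's; bring [m ^ n] and [m <= n] back. *)
Import ssrnat.

Set Implicit Arguments.
Unset Strict Implicit.
Unset Printing Implicit Defensive.

Lemma leq_card_bigcup (I T : finType) (P : pred I) (F : I -> {set T}) :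
  #|\bigcup_(i | P i) F i| <= \sum_(i | P i) #|F i|.
Proof.
elim/big_ind2: _ => [|A1 n1 A2 n2 h1 h2|//]; first by rewrite cards0.
by rewrite cardsU; apply: leq_trans (leq_subr _ _) (leq_add h1 h2).
Qed.

Lemma leq_expn2r m n e : m <= n -> m ^ e <= n ^ e.
Proof. by case: e => [|e] // le_mn; rewrite leq_exp2r. Qed.

Lemma ffact_leq_expn n m : n ^_ m <= n ^ m.
Proof.
rewrite ffact_prod -[in X in _ <= n ^ X](card_ord m) -prod_nat_const.
by apply: leq_prod => i _; apply: leq_subr.
Qed.

Lemma bin_leq_expn n m : 'C(n, m) <= n ^ m.
Proof.
by apply: leq_trans (ffact_leq_expn n m); rewrite -bin_ffact leq_pmulr ?fact_gt0.
Qed.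

Lemma bin_leq_exp2 k j : 'C(k, j) <= 2 ^ k.
Proof.
rewrite -[k in 'C(k, _)]card_ord -card_draws -[k in 2 ^ k]card_ord -cardsT.
by rewrite -card_powerset; apply/subset_leq_card/subsetP=> A _; rewrite powersetE subsetT.
Qed.

Lemma sum_bin_leq N h : \sum_(i < h.+1) 'C(N, i) <= N.+1 ^ h.
Proof.
elim: h => [|h IH]; first by rewrite big_ord1 bin0.
rewrite big_ord_recr /= expnS mulSn leq_add //.
by apply: leq_trans (bin_leq_expn _ _) _; rewrite expnS leq_mul2l leq_expn2r ?orbT.
Qed.

Lemma card_small_subsets (T : finType) (B : {set T}) h :
  #|[set H : {set T} | (H \subset B) && (#|H| <= h)]| <= #|B|.+1 ^ h.
Proof.
have cover : [set H : {set T} | (H \subset B) && (#|H| <= h)] \subset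
    \bigcup_(i < h.+1) [set H : {set T} | H \subset B & #|H| == i].
  apply/subsetP=> H; rewrite inE => /andP[sHB leHh].
  by apply/bigcupP; exists (Ordinal (leHh : #|H| < h.+1)); rewrite // inE sHB /=.
apply: leq_trans (subset_leq_card cover) _.
apply: leq_trans (leq_card_bigcup _ _) _.
by under eq_bigr do rewrite cards_draws; apply: sum_bin_leq.
Qed.

Lemma bin_mul_fact_leq a b k j : j <= k ->
  'C(a, k - j) * 'C(b, j) * k`! <= 2 ^ k * (a ^ (k - j) * b ^ j).
Proof.
move=> le_jk; rewrite -(bin_fact le_jk).
have -> : 'C(a, k - j) * 'C(b, j) * ('C(k, j) * (j`! * (k - j)`!))
   = 'C(k, j) * (('C(a, k - j) * (k - j)`!) * ('C(b, j) * j`!)) by lia.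
by rewrite !bin_ffact !leq_mul ?bin_leq_exp2 ?ffact_leq_expn.
Qed.

Lemma leq_expn_shift a b j J k : a <= b -> j <= J -> J <= k ->
  a ^ (k - j) * b ^ j <= a ^ (k - J) * b ^ J.
Proof.
move=> le_ab le_jJ le_Jk.
have -> : k - j = k - J + (J - j) by lia.
have -> : J = J - j + j by lia.
by rewrite addnK !expnD -mulnA leq_mul2l leq_mul2r leq_expn2r ?orbT.
Qed.

Lemma bigmax_eq0_or_cond m (P : pred nat) :
  \max_(j < m | P j) j = 0 \/ P (\max_(j < m | P j) j).
Proof.
apply: (big_ind (fun x => x = 0 \/ P x)); [by left | | by right].
by move=> x y x_ok y_ok; case: (leqP x y).
Qed.

Lemma INR_expn m e : INR (m ^ e) = (INR m ^ e)%R.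
Proof. by elim: e => [|e IH] //; rewrite expnS mult_INR IH. Qed.

Lemma succ_expn_leq k : k.+1 ^ k <= 3 * k ^ k.
Proof.
case: k => [|k] //; set K := k.+1.
apply/leP/INR_le; rewrite mult_INR !INR_expn [INR 3]/= [INR K.+1]S_INR.
have K_gt0 : (0 < INR K)%R by apply: lt_0_INR; lia.
have -> : (INR K + 1 = INR K * (1 + / INR K))%R by field; lra.
rewrite Rpow_mult_distr.
suff : ((1 + / INR K) ^ K <= 3)%R by have := pow_lt _ K K_gt0; nra.
apply: Rle_trans (exp_le_3); apply: Rle_trans (pow_incr _ _ K _) _.
  by split; [have := Rinv_0_lt_compat _ K_gt0; lra | apply: exp_ineq1_le].
rewrite -Rpower_pow; last exact: exp_pos.
by rewrite /Rpower ln_exp Rmult_comm Rinv_l; [apply: Rle_refl | lra].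
Qed.

Lemma expn_leq_fact k : k ^ k <= 3 ^ k * k`!.
Proof.
elim: k => [|k IH] //; rewrite factS expnS expnS.
have := succ_expn_leq k; nia.
Qed.

Section Complexes.
Variables n d : nat.
Hypothesis d_gt0 : 0 < d.
Local Notation T := {set 'I_n}.

Definition ridges : {set T} := [set s : T | #|s| == d.-1].

Definition ridge_deg (X : {set T}) (s : T) : nat := #|[set A in X | s \subset A]|.

Definition heavy_ridges (t : nat) (X : {set T}) : {set T} :=
  [set s in ridges | t <= ridge_deg X s].

Definition star (H : {set T}) : {set T} :=
  [set A in faces n d | [exists s in H, s \subset A]].

Definition light (t : nat) (X : {set T}) : {set T} := X :\: star (heavy_ridges t X).

Definition free_vertices (X : {set T}) (A : T) : {set 'I_n} :=
  [set v : 'I_n | (v \notin A) && [forall B in X, (B \subset v |: A) ==> (B == A)]].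

Definition near_vertices (X : {set T}) (A : T) : {set 'I_n} :=
  \bigcup_(s in [set s in ridges | s \subset A]) \bigcup_(B in [set B in X | s \subset B]) B.

Lemma card_faces : #|faces n d| = 'C(n, d).
Proof. by rewrite card_draws card_ord. Qed.

Lemma card_ridges : #|ridges| = 'C(n, d.-1).
Proof. by rewrite card_draws card_ord. Qed.

Lemma card_ridges_sub (A : T) : #|A| = d -> #|[set s in ridges | s \subset A]| = d.
Proof.
move=> cA; have -> : [set s in ridges | s \subset A] = [set s : T | s \subset A & #|s| == d.-1].
  by apply/setP=> s; rewrite !inE andbC.
by rewrite cards_draws cA -subn1 bin_sub ?bin1.
Qed.

Lemma ridge_deg_sum (X : {set T}) (s : T) : ridge_deg X s = \sum_(A in X) (s \subset A).
Proof.
rewrite /ridge_deg -sum1_card [RHS]big_mkcond [LHS]big_mkcond; apply: eq_bigr => A _.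
by rewrite !inE; case: (A \in X); case: (s \subset A).
Qed.

Lemma card_heavy_ridges t (X : {set T}) : X \subset faces n d ->
  #|heavy_ridges t X| * t <= d * #|X|.
Proof.
move=> XF; rewrite -sum_nat_const.
apply: (@leq_trans (\sum_(s in heavy_ridges t X) ridge_deg X s)).
  by apply: leq_sum => s; rewrite inE => /andP[].
apply: (@leq_trans (\sum_(s in ridges) ridge_deg X s)).
  rewrite [X in _ <= X](bigID (mem (heavy_ridges t X))) /=; apply: leq_trans (leq_addr _ _).
  by apply/eq_leq/eq_bigl => s; rewrite !inE; case: (#|s| == d.-1).
under eq_bigr do rewrite ridge_deg_sum.
rewrite exchange_big /= mulnC -sum_nat_const; apply: leq_sum => A AX.
have cA : #|A| = d by move: (subsetP XF A AX); rewrite inE => /eqP.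
rewrite -(card_ridges_sub cA) -sum1_card big_mkcond [X in _ <= X]big_mkcond.
by apply: leq_sum => s _; rewrite !inE; case: (#|s| == d.-1); case: (s \subset A).
Qed.

Lemma face_split (A s : T) : #|A| = d -> #|s| = d.-1 -> s \subset A ->
  exists v, A = v |: s.
Proof.
move=> cA cs sA; have : #|A :\: s| == 1 by rewrite cardsDS // cA cs; apply/eqP; lia.
case/cards1P=> v Av; exists v.
by rewrite -{1}(setID A s) (setIidPr sA) Av setUC.
Qed.

Lemma card_star (H : {set T}) : H \subset ridges -> #|star H| <= #|H| * n.
Proof.
move=> HR.
have cover : star H \subset \bigcup_(s in H) ((fun v => v |: s) @: [set: 'I_n]).
  apply/subsetP=> A; rewrite !inE => /andP[/eqP cA /existsP[s /andP[sH sA]]].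
  have cs : #|s| = d.-1 by move: (subsetP HR s sH); rewrite inE => /eqP.
  have [v ->] := face_split cA cs sA.
  by apply/bigcupP; exists s => //; apply/imsetP; exists v.
apply: leq_trans (subset_leq_card cover) _.
apply: leq_trans (leq_card_bigcup _ _) _.
rewrite -sum_nat_const; apply: leq_sum => s _.
by apply: leq_trans (leq_imset_card _ _) _; rewrite cardsT card_ord.
Qed.

Section LightFace.
Variables (t : nat) (X : {set T}) (A : T).
Hypotheses (XF : X \subset faces n d) (AL : A \in light t X).

Let AX : A \in X. Proof. by move: AL; rewrite inE => /andP[]. Qed.

Let card_face B : B \in X -> #|B| = d.
Proof. by move=> BX; move: (subsetP XF B BX); rewrite inE => /eqP. Qed.

Lemma light_ridge_deg_lt s : s \in ridges -> s \subset A -> ridge_deg X s < t.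
Proof.
move=> sR sA; rewrite ltnNge; apply/negP => heavy_s.
move: AL; rewrite inE => /andP[/negP not_star _]; apply: not_star.
rewrite inE (subsetP XF A AX); apply/existsP; exists s.
by rewrite !inE sA andbT; rewrite inE in sR; rewrite sR.
Qed.

Lemma card_near_vertices : #|near_vertices X A| <= d * (d * t).
Proof.
apply: leq_trans (leq_card_bigcup _ _) _.
rewrite -{1}(card_ridges_sub (card_face AX)) -sum_nat_const.
apply: leq_sum => s; rewrite inE => /andP[sR sA].
apply: leq_trans (leq_card_bigcup _ _) _.
apply: (@leq_trans (\sum_(B in [set B in X | s \subset B]) d)).
  by apply: leq_sum => B; rewrite inE => /andP[/card_face ->].
by rewrite sum_nat_const mulnC leq_mul2l ltnW ?orbT ?light_ridge_deg_lt.
Qed.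

(* A face B of X inside v |: A other than A contains v, so B :\ v is a ridge
   of A and v is near A. *)
Lemma far_vertices_free : ~: A :\: near_vertices X A \subset free_vertices X A.
Proof.
apply/subsetP=> v; rewrite !inE => /andP[v_far vA]; rewrite vA /=.
apply/forallP=> B; apply/implyP=> BX; apply/implyP=> BvA.
case vB: (v \in B).
  case/negP: v_far; apply/bigcupP; exists (B :\ v).
    rewrite !inE; apply/andP; split.
      by move: (cardsD1 v B); rewrite vB card_face //; lia.
    apply/subsetP=> x; rewrite inE => /andP[xv xB].
    by move: (subsetP BvA x xB); rewrite inE (negbTE xv).
  by apply/bigcupP; exists B; rewrite // inE BX subsetDl.
have BA : B \subset A.
  apply/subsetP=> x xB; move: (subsetP BvA x xB); rewrite !inE.
  by case/orP=> [/eqP xv|//]; move: vB; rewrite -xv xB.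
by rewrite eqEcard BA (card_face BX) (card_face AX) /=.
Qed.

Lemma card_free_vertices : n - d - d * (d * t) <= #|free_vertices X A|.
Proof.
apply: leq_trans (subset_leq_card far_vertices_free); rewrite cardsD.
have : #|~: A| = n - d by have := cardsC A; rewrite card_ord card_face //; lia.
have : #|~: A :&: near_vertices X A| <= #|near_vertices X A| by apply/subset_leq_card/subsetIr.
have := card_near_vertices; lia.
Qed.
End LightFace.

(* Each light face A with a free vertex v yields the d-face v |: A, whose only
   (d-1)-face in X is A; distinct pairs (A, v) yield distinct d-faces. *)
Lemma light_beta t (X : {set T}) : X \subset faces n d ->
  #|light t X| * (n - d - d * (d * t)) <= beta d X.
Proof.
move=> XF.
have face_card B : B \in X -> #|B| = d.
  by move=> BX; move: (subsetP XF B BX); rewrite inE => /eqP.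
have lightX A : A \in light t X -> A \in X by rewrite inE => /andP[].
pose P := [set p : T * 'I_n | (p.1 \in light t X) && (p.2 \in free_vertices X p.1)].
pose f (p : T * 'I_n) := p.2 |: p.1.
have f_beta : f @: P \subset [set s : T | (#|s| == d.+1) && (#|[set A in X | A \subset s]| == 1)].
  apply/subsetP=> s /imsetP[[A v]]; rewrite inE /= => /andP[AL].
  rewrite inE => /andP[vA /forallP free_v] ->.
  rewrite inE /f cardsU1 vA face_card ?lightX // add1n eqxx /=.
  apply/cards1P; exists A; apply/setP=> B; rewrite !inE.
  apply/andP/eqP => [[BX BvA]|->]; last by rewrite lightX // subsetUr.
  by have := free_v B; rewrite BX BvA => /eqP.
have f_inj : {in P &, injective f}.
  move=> [A v] [A' v']; rewrite [(A, v) \in P]inE [(A', v') \in P]inE /f /=.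
  move=> /andP[_]; rewrite inE => /andP[vA /forallP free_v] /andP[/lightX A'X _] E.
  have A'A : A' = A by have := free_v A'; rewrite A'X E subsetUr => /eqP.
  subst A'; have : v \in v' |: A by rewrite -E setU11.
  by rewrite !inE (negbTE vA) orbF => /eqP ->.
apply: leq_trans (subset_leq_card f_beta); rewrite (card_in_imset f_inj).
have -> : #|P| = \sum_(A : T) \sum_(v : 'I_n)
    ((A \in light t X) && (v \in free_vertices X A)).
  by rewrite -sum1_card big_mkcond pair_big /=; apply: eq_bigr => p _; rewrite inE.
rewrite [X in _ <= X](bigID (mem (light t X))) /=; apply: leq_trans (leq_addr _ _).
rewrite -sum_nat_const; apply: leq_sum => A AL.
apply: leq_trans (card_free_vertices XF AL) _.
by rewrite -sum1_card big_mkcond /=; apply: leq_sum => v _; rewrite AL.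
Qed.

Section Counting.
Variables (t k : nat) (P : pred nat).
Hypothesis t_gt0 : 0 < t.
Local Notation h := ((d * k) %/ t).
Local Notation J := (\max_(j < k.+1 | P j) j).
Local Notation constrained :=
  [set X : {set T} | [&& X \subset faces n d, #|X| == k & P #|light t X|]].

(* X is the disjoint union of its light part and its part inside the star of
   its heavy ridges, so it is determined by these two parts and the heavy ridges. *)
Lemma card_light_constrained_sum :
  #|constrained| <=
  \sum_(H in [set H : {set T} | (H \subset ridges) && (#|H| <= h)])
    \sum_(j < k.+1 | P j) 'C(#|star H|, k - j) * 'C(#|faces n d|, j).
Proof.
pose parts (B : {set T}) m := [set Y : {set T} | Y \subset B & #|Y| == m].
pose unions H (j : nat) :=
  [set Y.1 :|: Y.2 | Y in setX (parts (star H) (k - j)) (parts (faces n d) j)].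
have cover : constrained
    \subset \bigcup_(H in [set H : {set T} | (H \subset ridges) && (#|H| <= h)])
              \bigcup_(j < k.+1 | P j) unions H j.
  apply/subsetP=> X; rewrite inE => /and3P[XF /eqP cX PX].
  have lt_light_k : #|light t X| < k.+1 by rewrite ltnS -cX subset_leq_card ?subsetDl.
  apply/bigcupP; exists (heavy_ridges t X).
    rewrite inE leq_divRL // -cX card_heavy_ridges // andbT.
    by apply/subsetP=> s; rewrite inE => /andP[].
  apply/bigcupP; exists (Ordinal lt_light_k) => //.
  apply/imsetP; exists (X :&: star (heavy_ridges t X), light t X); last by rewrite /= setID.
  rewrite !inE subsetIr eqxx andbT (subset_trans (subsetDl _ _) XF) andbT /=.
  by have := cardsID (star (heavy_ridges t X)) X; rewrite cX => <-; rewrite addnK.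
apply: leq_trans (subset_leq_card cover) _.
apply: leq_trans (leq_card_bigcup _ _) _; apply: leq_sum => H _.
apply: leq_trans (leq_card_bigcup _ _) _; apply: leq_sum => j _.
by apply: leq_trans (leq_imset_card _ _) _; rewrite cardsX !cards_draws.
Qed.

Lemma card_light_constrained_fact :
  #|constrained| * k`! <=
  'C(n, d.-1).+1 ^ h * (k.+1 * (2 ^ k * ((h * n) ^ (k - J) * 'C(n, d) ^ J))).
Proof.
have le_Jk : J <= k by apply/bigmax_leqP => j _; rewrite -ltnS.
apply: leq_trans (leq_mul card_light_constrained_sum (leqnn _)) _.
rewrite big_distrl /= -card_ridges.
apply: leq_trans (leq_mul (card_small_subsets ridges h) (leqnn _)); rewrite -sum_nat_const.
apply: leq_sum => H; rewrite inE => /andP[HR le_Hh].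
rewrite big_distrl /= -[X in _ <= X * _](card_ord k.+1) -sum_nat_const.
rewrite [X in _ <= X](bigID (fun j : 'I_k.+1 => P j)) /=; apply: leq_trans (leq_addr _ _).
apply: leq_sum => j Pj.
have le_jk : j <= k by rewrite -ltnS.
apply: leq_trans (bin_mul_fact_leq _ _ le_jk) _; rewrite leq_mul2l; apply/orP; right.
have le_star_faces : #|star H| <= #|faces n d|.
  by apply/subset_leq_card/subsetP=> A; rewrite inE => /andP[].
apply: leq_trans (leq_expn_shift le_star_faces (leq_bigmax_cond j Pj) le_Jk) _.
rewrite card_faces leq_mul2r leq_expn2r ?orbT //.
by apply: leq_trans (card_star HR) _; rewrite leq_mul2r le_Hh orbT.
Qed.

Lemma card_light_constrained : 1 < n ->
  #|constrained| * k ^ k <= 12 ^ k * n ^ (d * h) * (h * n) ^ (k - J) * n ^ (d * J).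
Proof.
move=> n_gt1.
have ridge_bound : 'C(n, d.-1).+1 <= n ^ d.
  have -> : n ^ d = n * n ^ d.-1 by rewrite -expnS prednK.
  have := bin_leq_expn n d.-1; have : 0 < n ^ d.-1 by rewrite expn_gt0; lia.
  nia.
have face_bound : 'C(n, d) <= n ^ d by apply: bin_leq_expn.
have succ_k : k.+1 <= 2 ^ k by apply: ltn_expl.
set B := (h * n) ^ (k - J).
rewrite !expnM (_ : 12 ^ k = 3 ^ k * (2 ^ k * 2 ^ k)); last by rewrite -!expnMn.
apply: leq_trans (leq_mul (leqnn _) (expn_leq_fact k)) _.
rewrite mulnCA; apply: leq_trans (leq_mul (leqnn _) card_light_constrained_fact) _.
rewrite -!mulnA leq_mul2l; apply/orP; right.
have := leq_mul (leq_expn2r h ridge_bound)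
  (leq_mul succ_k (leq_mul (leqnn (2 ^ k * B)) (leq_expn2r J face_bound))).
rewrite -/B => bound; apply: leq_trans (leq_trans _ bound) _; apply: eq_leq; nia.
Qed.
End Counting.
End Complexes.

Section RealEstimates.
Local Open Scope R_scope.

Lemma ln_le x y : 0 < x -> x <= y -> ln x <= ln y.
Proof. by move=> x_gt0 [/(ln_increasing _ _ x_gt0) /Rlt_le | ->] //; apply: Rle_refl. Qed.

Lemma exp_le x y : x <= y -> exp x <= exp y.
Proof. by move=> [/exp_increasing /Rlt_le | ->] //; apply: Rle_refl. Qed.

Lemma ln_ge0 x : 1 <= x -> 0 <= ln x.
Proof. by move=> x_ge1; rewrite -ln_1; apply: ln_le; lra. Qed.

Lemma Rpower_gt0 x y : 0 < Rpower x y.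
Proof. exact: exp_pos. Qed.

Lemma Rpower_ge1 x y : 1 <= x -> 0 <= y -> 1 <= Rpower x y.
Proof. by move=> x_ge1 y_ge0; rewrite -(Rpower_O x); [apply: Rle_Rpower | lra]. Qed.

Lemma ln_le_Rpower x g : 1 <= x -> g * ln x <= Rpower x g.
Proof. by move=> _; apply: Rle_trans (exp_ineq1_le _); lra. Qed.

Lemma pow_mix_le (x y u v K : R) (k J : nat) : (J <= k)%N -> 0 <= K ->
  0 <= x <= K * u -> 0 <= y <= K * (u * v) -> x ^ (k - J) * y ^ J <= K ^ k * (u ^ k * v ^ J).
Proof.
move=> le_Jk K_ge0 [x_ge0 x_le] [y_ge0 y_le].
have -> : K ^ k * (u ^ k * v ^ J) = (K * u) ^ (k - J) * (K * (u * v)) ^ J.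
  rewrite !Rpow_mult_distr -(subnK le_Jk) !pow_add addnK; ring.
by apply: Rmult_le_compat; try apply: pow_le; try apply: pow_incr; lra.
Qed.

Lemma pow_le_Rpower x m y : 1 <= x -> INR m <= y -> x ^ m <= Rpower x y.
Proof. by move=> x_ge1 m_le; rewrite -Rpower_pow; [apply: Rle_Rpower | lra]. Qed.

Lemma pow_Rpower_sub2 x m : 0 < x -> x ^ m = x * x * Rpower x (INR m - 2).
Proof.
move=> x_gt0; rewrite -Rpower_pow // -{1}(Rplus_minus 2 (INR m)) Rpower_plus.
by rewrite (_ : 2 = INR 2) ?Rpower_pow /=; [ring | lra | ].
Qed.

Lemma le_exp_of_power_bound (d k h J : nat) (cnt n t D theta : R) :
  (2 <= d)%N -> (0 < k)%N -> (J <= k)%N -> 1 <= n -> 1 <= t -> 0 < D ->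
  cnt * INR k ^ k <= 12 ^ k * n ^ (d * h) * (INR h * n) ^ (k - J) * n ^ (d * J) ->
  INR h * t <= INR d * INR k -> n <= 3 * INR d * INR k ->
  INR J * D <= (1 - theta) * INR k * n ->
  cnt <= exp (INR k * (ln 12 + INR d ^ 2 * ln n / t + ln (INR d * n / t)
                       + (1 - theta) * n / D * ln (3 * Rpower n (INR d - 2) * t))).
Proof.
move=> d_ge2 k_gt0 le_Jk n_ge1 t_ge1 D_gt0 count_le h_le n_le J_le.
rewrite [n ^ (d * J)]pow_mult in count_le.
set K := INR k in count_le h_le n_le J_le *; set dr := INR d in h_le n_le *.
have K_gt0 : 0 < K by apply: lt_0_INR; apply/ltP.
have dr_ge2 : 2 <= dr by apply: (le_INR 2); apply/leP.
set a := dr * n / t; set r := 3 * Rpower n (dr - 2) * t.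
set Lambda := (1 - theta) * K * n / D.
have R_ge1 : 1 <= Rpower n (dr - 2) by apply: Rpower_ge1; lra.
have a_gt0 : 0 < a by apply: Rdiv_lt_0_compat; nra.
have hn_le : 0 <= INR h * n <= K * a.
  split; first by have := pos_INR h; nra.
  apply: (Rmult_le_reg_r t); first lra.
  have -> : K * a * t = dr * K * n by rewrite /a; field; lra.
  nra.
have nd_le : 0 <= n ^ d <= K * (a * r).
  split; first by apply: pow_le; lra.
  have -> : K * (a * r) = 3 * dr * K * n * Rpower n (dr - 2) by rewrite /a /r; field; lra.
  by rewrite pow_Rpower_sub2 -/dr; [apply: Rmult_le_compat_r; nra | lra].
have r_pow : r ^ J <= Rpower r Lambda.
  apply: pow_le_Rpower; first by rewrite /r; nra.
  apply: (Rmult_le_reg_r D) => //.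
  by rewrite /Lambda /Rdiv Rmult_assoc Rinv_l ?Rmult_1_r; lra.
have n_pow_dh : n ^ (d * h) <= Rpower n (dr ^ 2 * K / t).
  apply: pow_le_Rpower => //; rewrite mult_INR -/dr.
  apply: (Rmult_le_reg_r t); first lra.
  have -> : dr ^ 2 * K / t * t = dr * (dr * K) by field; lra.
  by rewrite Rmult_assoc; apply: Rmult_le_compat_l; lra.
have {}count_le : cnt <= 12 ^ k * Rpower n (dr ^ 2 * K / t) * (a ^ k * Rpower r Lambda).
  apply: (Rmult_le_reg_r (K ^ k)); first exact: pow_lt.
  apply: Rle_trans count_le _; rewrite Rmult_assoc.
  have -> : 12 ^ k * Rpower n (dr ^ 2 * K / t) * (a ^ k * Rpower r Lambda) * K ^ k =
      12 ^ k * Rpower n (dr ^ 2 * K / t) * (K ^ k * (a ^ k * Rpower r Lambda)) by ring.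
  apply: Rmult_le_compat.
  - by apply: Rmult_le_pos; apply: pow_le; lra.
  - by apply: Rmult_le_pos; apply: pow_le; nra.
  - by apply: Rmult_le_compat_l => //; apply: pow_le; lra.
  apply: Rle_trans (pow_mix_le le_Jk (Rlt_le _ _ K_gt0) hn_le nd_le) _.
  apply: Rmult_le_compat_l; first by apply: pow_le; lra.
  by apply: Rmult_le_compat_l => //; apply: pow_le; lra.
apply: Rle_trans count_le (Req_le _ _ _).
rewrite -(Rpower_pow k 12) -?(Rpower_pow k a) -/K; try lra.
rewrite /Rpower -!exp_plus; congr exp.
by rewrite /Lambda; field; lra.
Qed.

Definition gain (d : R) : R := (d - 1) / (2 * d ^ 2).

Lemma gain_bounds d : 2 <= d -> 0 < gain d <= 1 / 4.
Proof.
move=> d_ge2; rewrite /gain; split; first by apply: Rdiv_lt_0_compat; nra.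
apply: (Rmult_le_reg_r (2 * d ^ 2)); first nra.
by rewrite /Rdiv Rmult_assoc Rinv_l; nra.
Qed.

Definition log_const (d : R) : R :=
  ln 12 + ln d + (1 + 6 * d ^ 2) * ln 6 + (d ^ 2 + 6 * d ^ 3) / gain d.

Section LogBound.
Variables d n t D theta : R.
Let g := gain d.
Let p := Rpower n (1 - g).
Let q := Rpower n g.
Let L := ln n.
Hypotheses (d_ge2 : 2 <= d) (n_ge1 : 1 <= n) (theta_01 : 0 <= theta <= 1).
Hypotheses (q_large : 6 * d ^ 2 <= q) (p_le_t : p <= t) (t_le_2p : t <= 2 * p).
Hypotheses (D_large : n / 2 <= D) (D_close : n - D <= 3 * d ^ 2 * p).

Let g_bounds : 0 < g <= 1 / 4. Proof. exact: gain_bounds. Qed.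
Let L_ge0 : 0 <= L. Proof. exact: ln_ge0. Qed.
Let q_ge1 : 1 <= q. Proof. by apply: Rpower_ge1; lra. Qed.
Let p_ge1 : 1 <= p. Proof. by apply: Rpower_ge1; lra. Qed.
Let q_le_p : q <= p. Proof. by apply: Rle_Rpower; lra. Qed.
Let pq : p * q = n.
Proof. by rewrite /p /q -Rpower_plus (_ : 1 - g + g = 1) ?Rpower_1; lra. Qed.
Let gL_le_q : g * L <= q. Proof. exact: ln_le_Rpower. Qed.

Lemma ln_n_div_t : d ^ 2 * L / t <= d ^ 2 / g.
Proof.
apply: (Rmult_le_reg_r (t * g)); first nra.
have -> : d ^ 2 * L / t * (t * g) = d ^ 2 * (g * L) by field; lra.
have -> : d ^ 2 / g * (t * g) = d ^ 2 * t by field; lra.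
apply: Rmult_le_compat_l; nra.
Qed.

Lemma ln_dn_div_t : ln (d * n / t) <= ln d + g * L.
Proof.
have n_div_t : d * n / t <= d * q.
  apply: (Rmult_le_reg_r t); first lra.
  have -> : d * n / t * t = d * (p * q) by rewrite pq; field; lra.
  have : 0 <= d * q by nra.
  nra.
apply: Rle_trans (ln_le _ n_div_t) _; first by apply: Rdiv_lt_0_compat; nra.
by rewrite ln_mult ?ln_Rpower; [apply: Rle_refl | lra | apply: Rpower_gt0].
Qed.

Lemma ln_ratio_bounds :
  0 <= ln (3 * Rpower n (d - 2) * t) <= ln 6 + (d - 1 - g) * L.
Proof.
have n_d2 : 1 <= Rpower n (d - 2) by apply: Rpower_ge1; lra.
split; first by apply: ln_ge0; nra.
have -> : ln 6 + (d - 1 - g) * L = ln (6 * Rpower n (d - 2) * p).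
  have R_gt0 := Rpower_gt0 n (d - 2).
  rewrite ln_mult; [|nra | apply: Rpower_gt0].
  by rewrite ln_mult ?ln_Rpower -/L; [ring | lra | lra].
by apply: ln_le; nra.
Qed.

Lemma density_ratio_le : (1 - theta) * n / D <= (1 - theta) + 6 * d ^ 2 / q.
Proof.
have n_div_D : n / D <= 1 + 6 * d ^ 2 / q.
  apply: (Rmult_le_reg_r (D * q)); first nra.
  have -> : n / D * (D * q) = n * q by field; lra.
  have -> : (1 + 6 * d ^ 2 / q) * (D * q) = D * q + 6 * d ^ 2 * D by field; lra.
  have : (n - D) * q <= 3 * d ^ 2 * (p * q) by nra.
  rewrite pq; nra.
have : 0 <= 6 * d ^ 2 / q by apply: Rmult_le_pos; [nra | apply/Rlt_le/Rinv_0_lt_compat; lra].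
rewrite /Rdiv Rmult_assoc -/(Rdiv n D); nra.
Qed.

Lemma log_bound :
  ln 12 + d ^ 2 * L / t + ln (d * n / t) + (1 - theta) * n / D * ln (3 * Rpower n (d - 2) * t)
  <= log_const d + (d - 1) * (1 - theta * (1 - 1 / (2 * d ^ 2))) * L.
Proof.
have [l_ge0 l_le] := ln_ratio_bounds.
set l := ln (3 * _ * t) in l_ge0 l_le *.
have rho_l : (1 - theta) * n / D * l <= ((1 - theta) + 6 * d ^ 2 / q) * l.
  exact: Rmult_le_compat_r l_ge0 density_ratio_le.
have main_l : (1 - theta) * l <= (1 - theta) * (ln 6 + (d - 1 - g) * L).
  by apply: Rmult_le_compat_l; lra.
have excess_l : 6 * d ^ 2 / q * l <= 6 * d ^ 2 * ln 6 + 6 * d ^ 3 / g.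
  apply: (Rmult_le_reg_r (q * g)); first nra.
  have -> : 6 * d ^ 2 / q * l * (q * g) = 6 * d ^ 2 * (g * l) by field; lra.
  have -> : (6 * d ^ 2 * ln 6 + 6 * d ^ 3 / g) * (q * g) = 6 * d ^ 2 * (g * q * ln 6 + d * q).
    by field; lra.
  apply: Rmult_le_compat_l; first nra.
  have ln6_ge0 : 0 <= ln 6 by apply: ln_ge0; lra.
  have : g * l <= g * (ln 6 + (d - 1 - g) * L) by apply: Rmult_le_compat_l; lra.
  have : (d - 1 - g) * (g * L) <= d * q by apply: Rmult_le_compat; nra.
  have : 0 <= g * ln 6 by nra.
  nra.
have ln6_ge0 : 0 <= ln 6 by apply: ln_ge0; lra.
have exponent : (d - 1) * (1 - theta * (1 - 1 / (2 * d ^ 2))) = g + (1 - theta) * (d - 1 - g).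
  by rewrite /g /gain; field; lra.
have split_const : (d ^ 2 + 6 * d ^ 3) / g = d ^ 2 / g + 6 * d ^ 3 / g by field; lra.
have := ln_n_div_t; have := ln_dn_div_t.
rewrite exponent /log_const -/g split_const; nra.
Qed.
End LogBound.

Lemma exists_nat_between x : 0 <= x -> exists t : nat, x <= INR t <= x + 1.
Proof.
move=> x_ge0; have [up_gt up_le] := archimed x.
have up_pos : (0 <= up x)%Z by apply: le_IZR; lra.
by exists (Z.to_nat (up x)); rewrite INR_IZR_INZ Znat.Z2Nat.id //; lra.
Qed.

Section Threshold.
Variables d n : nat.
Hypotheses (d_ge2 : (2 <= d)%N) (n_large : ((6 * d * d) ^ (4 * d) <= n)%N).
Let dr := INR d.
Let nr := INR n.
Let g := gain dr.
Let p := Rpower nr (1 - g).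
Let q := Rpower nr g.
Let dr_ge2 : 2 <= dr. Proof. by apply: (le_INR 2); apply/leP. Qed.

(* [n >= (6 d^2)^(4 d)] and [gain d >= 1 / (4 d)] give [n^(gain d) >= 6 d^2]. *)
Lemma large_n_bounds : 1 <= nr /\ 6 * dr ^ 2 <= q.
Proof.
set M := 6 * dr ^ 2.
have M_ge1 : 1 <= M by rewrite /M; nra.
have M_pow_le : M ^ (4 * d) <= nr.
  rewrite /nr /M /dr (_ : 6 * INR d ^ 2 = INR (6 * d * d)); last by rewrite !mult_INR /=; ring.
  by rewrite -INR_expn; apply/le_INR/leP.
have nr_ge1 : 1 <= nr by apply: Rle_trans M_pow_le; apply: pow_R1_Rle.
split => //; apply: (@Rle_trans _ (Rpower nr (/ (4 * dr)))).
  apply: (@Rle_trans _ (Rpower (M ^ (4 * d)) (/ (4 * dr)))).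
    rewrite -Rpower_pow ?Rpower_mult; last lra.
    rewrite mult_INR -/dr (_ : INR 4 * dr * / (4 * dr) = 1) ?Rpower_1 /=; [lra | lra | field; lra].
  by apply: Rle_Rpower_l; [apply/Rlt_le/Rinv_0_lt_compat; lra | split; [apply: pow_lt; lra |]].
apply: Rle_Rpower => //; rewrite /g /gain.
apply: (Rmult_le_reg_r (4 * dr * (2 * dr ^ 2))); first nra.
have -> : / (4 * dr) * (4 * dr * (2 * dr ^ 2)) = 2 * dr ^ 2 by field; lra.
have -> : (dr - 1) / (2 * dr ^ 2) * (4 * dr * (2 * dr ^ 2)) = 4 * dr * (dr - 1) by field; lra.
nra.
Qed.

Lemma exists_threshold : exists t : nat,
  [/\ p <= INR t <= 2 * p, (0 < t)%N, (d + d * (d * t) <= n)%N,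
      nr / 2 <= INR (n - d - d * (d * t)) & nr - INR (n - d - d * (d * t)) <= 3 * dr ^ 2 * p].
Proof.
have [nr_ge1 q_large] := large_n_bounds.
have [g_gt0 g_le] := gain_bounds dr_ge2; rewrite -/g in g_gt0 g_le.
have p_ge1 : 1 <= p by apply: Rpower_ge1; lra.
have pq : p * q = nr by rewrite /p /q -Rpower_plus (_ : 1 - g + g = 1) ?Rpower_1; lra.
have [t [p_le_t t_le]] := exists_nat_between (Rle_trans _ _ _ Rle_0_1 p_ge1).
set tr := INR t in p_le_t t_le.
have t_gt0 : (0 < t)%N by apply/ltP/INR_lt; rewrite /= -/tr; lra.
have small : dr + dr * (dr * tr) <= nr / 2.
  have : 6 * dr ^ 2 * p <= q * p by apply: Rmult_le_compat_r; lra.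
  nra.
have le_n : (d + d * (d * t) <= n)%N.
  by apply/leP/INR_le; rewrite plus_INR !mult_INR -/dr -/tr -/nr; nra.
exists t; have -> : INR (n - d - d * (d * t)) = nr - (dr + dr * (dr * tr)).
  by rewrite -subnDA minus_INR ?plus_INR ?mult_INR //; apply/leP.
by split; rewrite // -/tr; nra.
Qed.
End Threshold.
End RealEstimates.

Definition admissible_light (n d k t : nat) (theta : R) (j : nat) : bool :=
  if Rle_dec (INR j * INR (n - d - d * (d * t))) ((1 - theta) * INR k * INR n) then true
  else false.

Section CountBound.
Variables (n d k t : nat) (theta : R).
Local Notation h := ((d * k) %/ t).
Local Notation J := (\max_(j < k.+1 | admissible_light n d k t theta j) j).

Lemma count_complexes_le_light : 0 < d ->
  count_complexes n d k theta <= #|[set X : {set {set 'I_n}} |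
    [&& X \subset faces n d, #|X| == k & admissible_light n d k t theta #|light d t X|]]|.
Proof.
move=> d_gt0; apply/subset_leq_card/subsetP => X; rewrite !inE => /and3P[XF cX].
case: Rle_dec => // beta_le _; rewrite XF cX /admissible_light.
case: Rle_dec => // -[]; apply: Rle_trans beta_le.
by rewrite -mult_INR; apply/le_INR/leP/light_beta.
Qed.

Lemma count_complexes_power_bound : 0 < d -> 0 < t -> 1 < n ->
  (INR (count_complexes n d k theta) * INR k ^ k <=
   12 ^ k * INR n ^ (d * h) * (INR h * INR n) ^ (k - J) * INR n ^ (d * J))%R.
Proof.
move=> d_gt0 t_gt0 n_gt1.
have := card_light_constrained d_gt0 k (admissible_light n d k t theta) t_gt0 n_gt1.
move/(leq_trans (leq_mul (count_complexes_le_light d_gt0) (leqnn _))).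
rewrite (_ : 12%R = INR 12); last by rewrite /=; lra.
by rewrite -[(INR h * INR n)%R]mult_INR -!INR_expn -!mult_INR => /leP/le_INR.
Qed.

Lemma admissible_bigmax : (0 <= theta <= 1)%R ->
  (INR J * INR (n - d - d * (d * t)) <= (1 - theta) * INR k * INR n)%R.
Proof.
move=> theta01; have [-> | ] := bigmax_eq0_or_cond k.+1 (admissible_light n d k t theta).
  by rewrite Rmult_0_l; apply: Rmult_le_pos; [apply: Rmult_le_pos|]; try apply: pos_INR; lra.
by rewrite /admissible_light; case: Rle_dec.
Qed.
End CountBound.

Lemma count_complexes_eq0 n d k theta :
  (0 < INR k * INR n)%R -> (1 < theta)%R -> count_complexes n d k theta = 0.
Proof.
move=> kn_gt0 theta_gt1; apply/eqP; rewrite cards_eq0; apply/eqP/setP => X; rewrite !inE.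
case: Rle_dec => beta_le; last by rewrite !andbF.
by exfalso; have := pos_INR (beta d X); nra.
Qed.

Lemma count_complexes_le_exp (d n k : nat) (theta : R) :
  2 <= d -> (6 * d * d) ^ (4 * d) <= n ->
  (INR n / (3 * INR d) <= INR k)%R -> (0 <= theta)%R ->
  (INR (count_complexes n d k theta) <= exp (INR k *
     (log_const (INR d) + (INR d - 1) * (1 - theta * (1 - 1 / (2 * INR d ^ 2))) * ln (INR n))))%R.
Proof.
move=> d_ge2 n_large k_large theta_ge0; have d_gt0 : 0 < d by lia.
have dr_ge2 : (2 <= INR d)%R by apply: (le_INR 2); apply/leP.
have [n_ge1 q_large] := large_n_bounds d_ge2 n_large.
have [t [[p_le_t t_le] t_gt0 le_n D_large D_close]] := exists_threshold d_ge2 n_large.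
have K_gt0 : (0 < INR k)%R.
  by apply: Rlt_le_trans k_large; apply: Rdiv_lt_0_compat; lra.
have k_gt0 : 0 < k by apply/ltP/INR_lt.
have n_le : (INR n <= 3 * INR d * INR k)%R.
  rewrite {1}(_ : INR n = 3 * INR d * (INR n / (3 * INR d)))%R; last by field; lra.
  by apply: Rmult_le_compat_l; lra.
have [theta_gt1 | theta_le1] := Rlt_le_dec 1 theta.
  by rewrite count_complexes_eq0 //; [apply/Rlt_le/exp_pos | nra].
have theta01 : (0 <= theta <= 1)%R by lra.
have le_Jk : \max_(j < k.+1 | admissible_light n d k t theta j) j <= k.
  by apply/bigmax_leqP => j _; rewrite -ltnS.
have h_le : (INR ((d * k) %/ t) * INR t <= INR d * INR k)%R.
  by rewrite -!mult_INR; apply/le_INR/leP/leq_divM.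
have n_gt1 : 1 < n by lia.
have power_bound := count_complexes_power_bound k theta d_gt0 t_gt0 n_gt1.
apply: Rle_trans (le_exp_of_power_bound d_ge2 k_gt0 le_Jk n_ge1 _ _ power_bound h_le n_le
  (admissible_bigmax n d k t theta01)) _.
- by apply: (le_INR 1); apply/leP.
- lra.
apply: exp_le; apply: Rmult_le_compat_l; first lra.
exact: log_bound dr_ge2 n_ge1 theta01 q_large p_le_t t_le D_large D_close.
Qed.

Theorem lemma8 : forall d : nat, (2 <= d)%N ->
  exists c : R, (0 < c)%R /\
  exists N : nat, forall n : nat, (N <= n)%N ->
  forall k : nat, (INR n / (3 * INR d) <= INR k)%R ->
  forall theta : R, (1 / (2 * INR d) <= theta)%R ->
  (INR (count_complexes n d k theta) <=
     (c * Rpower (INR n)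
            ((INR d - 1) * (1 - theta * (1 - 1 / (2 * INR d ^ 2))))) ^ k)%R.
Proof.
move=> d d_ge2; exists (exp (log_const (INR d))); split; first exact: exp_pos.
exists ((6 * d * d) ^ (4 * d)) => n n_large k k_large theta theta_ge.
have dr_ge2 : (2 <= INR d)%R by apply: (le_INR 2); apply/leP.
have theta_ge0 : (0 <= theta)%R.
  by apply: Rle_trans theta_ge; apply/Rlt_le/Rdiv_lt_0_compat; lra.
rewrite -Rpower_pow; last by apply: Rmult_lt_0_compat; [apply: exp_pos | apply: Rpower_gt0].
rewrite /Rpower ln_mult ?ln_exp ?ln_Rpower; try apply: exp_pos; try apply: Rpower_gt0.
exact: count_complexes_le_exp.
Qed.
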